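(* Let $\psi\in\mathrm{Sp}_0(V,\omega)$ be fixed. For every $\Phi\in\mathrm{Sp}_\psi(V,\omega)$ the linear operator \[ \mathcal C_\psi(\Phi)=J(\psi-\mathrm{Id})(\Phi-\psi)^{-1}(\Phi-\mathrm{Id}):V\to V \] is symmetric with respect to $\langle\cdot,\cdot\rangle$, and $\mathrm{Ker}\big(\mathcal C_\psi(\Phi)\big)=\mathrm{Ker}(\Phi-\mathrm{Id})$.
   Context: Let $(V,\omega)$ be a real symplectic vector space of finite dimension and $\mathrm{Sp}(V,\omega)$ its symplectic group. Fix a linear map $J:V\to V$ with $J^2=-\mathrm{Id}$ and a positive definite inner product $\langle\cdot,\cdot\rangle$ on $V$ such that $\omega(u,v)=\langle Ju,v\rangle$ for all $u,v\in V$. For $\psi\in\mathrm{Sp}(V,\omega)$, $\mathrm{Sp}_\psi(V,\omega)$ denotes the set of $\Phi\in\mathrm{Sp}(V,\omega)$ such that $\Phi-\psi$ is invertible, and $\mathrm{Sp}_0(V,\omega)=\mathrm{Sp}_{\mathrm{Id}}(V,\omega)$. *)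

(* V is modelled as R^n = 'cV[R]_n (column vectors), linear
   maps as n x n matrices acting on the left. *)
From mathcomp Require Import all_boot all_order all_algebra.
From mathcomp Require Import reals.
Set Implicit Arguments. Unset Strict Implicit. Unset Printing Implicit Defensive.
Import Order.TTheory GRing.Theory Num.Theory.
Local Open Scope ring_scope.

Section Defs.
Variables (R : realType) (n : nat).

Definition bform (M : 'M[R]_n) (u v : 'cV[R]_n) : R := (u^T *m M *m v) 0 0.

Definition is_inner_product (G : 'M[R]_n) : Prop :=
  G^T = G /\ forall u : 'cV[R]_n, u != 0 -> 0 < bform G u u.

Definition is_symplectic_form (W : 'M[R]_n) : Prop :=
  W^T = - W /\ W \in unitmx.

Definition Sp (W : 'M[R]_n) (Phi : 'M[R]_n) : Prop :=
  Phi \in unitmx /\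
  forall u v : 'cV[R]_n, bform W (Phi *m u) (Phi *m v) = bform W u v.

Definition Sp_psi (W psi Phi : 'M[R]_n) : Prop :=
  Sp W Phi /\ (Phi - psi) \in unitmx.

Definition C_psi (J psi Phi : 'M[R]_n) : 'M[R]_n :=
  J *m (psi - 1%:M) *m invmx (Phi - psi) *m (Phi - 1%:M).

End Defs.

(* Put x := (Phi - psi)^-1 (Phi - 1) u, so that Phi (x - u) = psi x - u.
   Expanding omega(Phi (x - u), Phi (y - v)) = omega(x - u, y - v) and using
   that psi is symplectic gives omega((psi - 1) x, v) = omega((psi - 1) y, u);
   since <C u, v> = omega((psi - 1) x, v), this is the symmetry of C.  The
   kernel statement holds because C is (Phi - 1) followed by invertible maps. *)
From mathcomp Require Import all_boot all_order all_algebra.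
From mathcomp Require Import reals.
From mathcomp Require Import lra.
Set Implicit Arguments.
Unset Strict Implicit.
Unset Printing Implicit Defensive.
Import Order.TTheory GRing.Theory Num.Theory.
Local Open Scope ring_scope.

Lemma unitmx_mulmx_eq0 (R : comUnitRingType) (n : nat) (A : 'M[R]_n)
    (v : 'cV[R]_n) :
  A \in unitmx -> (A *m v == 0) = (v == 0).
Proof.
move=> Aunit; apply/eqP/eqP => [Av0|->]; last exact: mulmx0.
by rewrite -(mulKmx Aunit v) Av0 mulmx0.
Qed.

Section BilinearForm.
Variables (R : realType) (n : nat).
Implicit Types (M : 'M[R]_n) (a b c : 'cV[R]_n).

Lemma bform_trmx M a b : bform M a b = bform M^T b a.
Proof.
rewrite /bform -[in LHS](trmxK (a^T *m M *m b)) mxE.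
by rewrite !trmx_mul trmxK mulmxA.
Qed.

Lemma bformBl M a b c : bform M (a - b) c = bform M a c - bform M b c.
Proof. by rewrite /bform linearB /= !mulmxBl !mxE. Qed.

Lemma bformBr M a b c : bform M c (a - b) = bform M c a - bform M c b.
Proof. by rewrite /bform !mulmxBr !mxE. Qed.

Lemma bformN M a b : bform (- M) a b = - bform M a b.
Proof. by rewrite /bform mulmxN mulNmx !mxE. Qed.

Lemma bform_sym M : M^T = M -> forall a b, bform M a b = bform M b a.
Proof. by move=> MT a b; rewrite bform_trmx MT. Qed.

Lemma bform_skew M : M^T = - M -> forall a b, bform M a b = - bform M b a.
Proof. by move=> MT a b; rewrite bform_trmx MT bformN. Qed.

End BilinearForm.

Section Resolvent.
Variables (R : realType) (n : nat) (W psi Phi : 'M[R]_n).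
Hypothesis W_skew : W^T = - W.
Hypothesis psi_sympl : forall a b, bform W (psi *m a) (psi *m b) = bform W a b.
Hypothesis Phi_sympl : forall a b, bform W (Phi *m a) (Phi *m b) = bform W a b.

Lemma resolvent_shift (x u : 'cV[R]_n) :
  (Phi - psi) *m x = (Phi - 1%:M) *m u -> Phi *m (x - u) = psi *m x - u.
Proof.
rewrite !mulmxBl !mulmxBr mul1mx => e.
by rewrite -[Phi *m x](subrK (psi *m x)) e -addrA addrC addrA subrK.
Qed.

Lemma bform_resolvent_swap (x u y v : 'cV[R]_n) :
  (Phi - psi) *m x = (Phi - 1%:M) *m u ->
  (Phi - psi) *m y = (Phi - 1%:M) *m v ->
  bform W ((psi - 1%:M) *m x) v = bform W ((psi - 1%:M) *m y) u.
Proof.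
move=> /resolvent_shift hx /resolvent_shift hy.
have := Phi_sympl (x - u) (y - v); rewrite hx hy.
rewrite !mulmxBl !mul1mx !bformBl !bformBr psi_sympl.
rewrite (bform_skew W_skew u (psi *m y)) (bform_skew W_skew u y).
lra.
Qed.

End Resolvent.

Lemma C_psiE (R : realType) (n : nat) (J psi Phi : 'M[R]_n) (u : 'cV[R]_n) :
  C_psi J psi Phi *m u =
  J *m ((psi - 1%:M) *m (invmx (Phi - psi) *m ((Phi - 1%:M) *m u))).
Proof. by rewrite /C_psi -!mulmxA. Qed.

Theorem lemma2p6 (R : realType) (n : nat) (W J G : 'M[R]_n)
  (hW : is_symplectic_form W) (hG : is_inner_product G)
  (hJ : J *m J = - 1%:M)
  (hcompat : forall u v : 'cV[R]_n, bform W u v = bform G (J *m u) v)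
  (psi : 'M[R]_n) (hpsi : Sp_psi W 1%:M psi)
  (Phi : 'M[R]_n) (hPhi : Sp_psi W psi Phi) :
  (forall u v : 'cV[R]_n,
      bform G (C_psi J psi Phi *m u) v = bform G u (C_psi J psi Phi *m v)) /\
  (forall v : 'cV[R]_n,
      C_psi J psi Phi *m v = 0 <-> (Phi - 1%:M) *m v = 0).
Proof.
case: hW => W_skew _; case: hG => G_sym _.
case: hpsi => [[_ psi_sympl] psi1_unit]; case: hPhi => [[_ Phi_sympl] Phipsi_unit].
have resolvent_eq (u : 'cV[R]_n) :
    (Phi - psi) *m (invmx (Phi - psi) *m ((Phi - 1%:M) *m u)) = (Phi - 1%:M) *m u.
  exact: mulKVmx.
split=> [u v | v].
  rewrite !C_psiE -hcompat (bform_sym G_sym) -hcompat.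
  exact: (bform_resolvent_swap W_skew psi_sympl Phi_sympl
            (resolvent_eq u) (resolvent_eq v)).
have J_unit : J \in unitmx.
  by have [] := @mulmx1_unit _ _ J (- J); rewrite // mulmxN hJ opprK.
rewrite C_psiE; split=> [/eqP | ->]; last by rewrite !mulmx0.
rewrite unitmx_mulmx_eq0 // unitmx_mulmx_eq0 // unitmx_mulmx_eq0 ?unitmx_inv //.
by move/eqP.
Qed.
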